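(* Let $M$ be a matroid on a finite set $E$, and let $P$ and $Q$ be two partitions of $\cup\mathcal{B}(M)$ such that for every $B\in\mathcal{B}(M)$, every $K\in P$ and every $L\in Q$, we have $|B\cap K|=1$ and $|B\cap L|=1$. Then $P=Q$.
   Context: $\mathcal{B}(M)$ denotes the family of bases of $M$ and $\cup\mathcal{B}(M)$ the union of all bases. A partition of a set $U$ is a family of nonempty pairwise disjoint subsets of $U$ whose union is $U$. *)

From mathcomp Require Import all_boot.
Set Implicit Arguments. Unset Strict Implicit. Unset Printing Implicit Defensive.

Definition matroid_bases (T : finType) (E : {set T}) (bases : {set {set T}}) : Prop :=
  [/\ forall B, B \in bases -> B \subset E,
      bases != set0 &
      forall B1 B2 x, B1 \in bases -> B2 \in bases -> x \in B1 :\: B2 ->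
        exists2 y, y \in B2 :\: B1 & (B1 :\ x) :|: [set y] \in bases].

Record matroid (T : finType) := Matroid {
  ground : {set T};
  bases : {set {set T}};
  matroid_basesP : matroid_bases ground bases }.

Definition union_bases (T : finType) (M : matroid T) : {set T} :=
  \bigcup_(B in bases M) B.

From mathcomp Require Import all_boot.
Set Implicit Arguments. Unset Strict Implicit. Unset Printing Implicit Defensive.

(* If every basis meets every block of P exactly once, two elements x <> y of
   \cup B(M) lie in the same block iff no basis contains both of them. Only if
   is clear. Conversely, let y lie in a basis B and x in a basis B', and let w
   be the point of B in the block K of x. If w <> x then w is not in B', and
   exchanging w out of B against B' yields a basis that must still meet K,
   so the new point is the unique point x of B' in K: this basis contains x
   and y. Hence the blocks of P are the classes of a relation defined by M alone,
   and P = Q. *)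

Section MatroidTransversalPartition.

Variables (T : finType) (M : matroid T).

(* For x, y in \cup B(M) (hence non-loops), this is parallelism in M. *)
Definition parallel : rel T :=
  fun x y => (x == y) || ~~ [exists B in bases M, (x \in B) && (y \in B)].

Variable P : {set {set T}}.
Hypothesis partP : partition P (union_bases M).
Hypothesis basis_block1 :
  forall B K, B \in bases M -> K \in P -> #|B :&: K| = 1.

Lemma basis_block_uniq B K x y :
  B \in bases M -> K \in P -> x \in B -> x \in K -> y \in B -> y \in K ->
  x = y.
Proof.
move=> BM KP xB xK yB yK.
have /card_le1_eqP eqBK : #|B :&: K| <= 1 by rewrite basis_block1.
by apply: eqBK; rewrite inE ?xB ?yB.
Qed.

Lemma basis_meets_block B K :
  B \in bases M -> K \in P -> exists2 w, w \in B & w \in K.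
Proof.
move=> BM KP; have : #|B :&: K| != 0 by rewrite basis_block1.
by rewrite cards_eq0 => /set0Pn[w /setIP[]]; exists w.
Qed.

Lemma block_exchange B B' K w :
  B \in bases M -> B' \in bases M -> K \in P ->
  w \in B -> w \in K -> w \notin B' ->
  exists2 y, y \in B' :&: K & (B :\ w) :|: [set y] \in bases M.
Proof.
move=> BM B'M KP wB wK wB'.
have [_ _ exchange] := matroid_basesP M.
have [|y /setDP[yB' _] B1M] := exchange B B' w BM B'M; first exact/setDP.
exists y => //; rewrite inE yB' /=.
have [v] := basis_meets_block B1M KP.
rewrite !inE => /orP[/andP[vw vB] vK | /eqP-> //].
by rewrite (basis_block_uniq BM KP vB vK wB wK) eqxx in vw.
Qed.

Lemma mem_pblock_parallel x y :
  x \in union_bases M -> y \in union_bases M -> (y \in pblock P x) = parallel x y.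
Proof.
move=> Ux Uy; have Px : x \in cover P by rewrite (cover_partition partP).
set K := pblock P x; have KP : K \in P := pblock_mem Px.
have xK : x \in K by rewrite mem_pblock.
rewrite /parallel; have [<- // | xy] /= := eqVneq x y.
apply/idP/idP => [yK | ]; last apply: contraR => yK.
  apply/exists_inP => -[B BM /andP[xB yB]].
  by rewrite (basis_block_uniq BM KP xB xK yB yK) eqxx in xy.
have [B BM yB] := bigcupP Uy; have [Bx BxM xBx] := bigcupP Ux.
have [w wB wK] := basis_meets_block BM KP.
have [-> | wx] := eqVneq x w; first by apply/exists_inP; exists B; rewrite ?wB.
have wBx : w \notin Bx.
  by apply: contra wx => wBx; rewrite (basis_block_uniq BxM KP xBx xK wBx wK).
have [y' /setIP[y'Bx y'K] B1M] := block_exchange BM BxM KP wB wK wBx.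
rewrite -(basis_block_uniq BxM KP xBx xK y'Bx y'K) in B1M.
apply/exists_inP; exists ((B :\ w) :|: [set x]) => //.
rewrite !inE eqxx orbT yB andbT /=; apply/orP; left.
by apply: contraNneq yK => ->.
Qed.

Lemma partition_parallel :
  P = equivalence_partition parallel (union_bases M).
Proof.
rewrite -{1}(equivalence_partition_pblock partP); apply: eq_in_imset => x Ux.
by apply/setP => y; rewrite !inE; apply: andb_id2l => Uy; rewrite mem_pblock_parallel.
Qed.

End MatroidTransversalPartition.

Theorem proposition17 (T : finType) (M : matroid T) (P Q : {set {set T}}) :
  partition P (union_bases M) ->
  partition Q (union_bases M) ->
  (forall B K L, B \in bases M -> K \in P -> L \in Q ->
     #|B :&: K| = 1 /\ #|B :&: L| = 1) ->
  P = Q.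
Proof.
move=> partP partQ basis_block1.
have [U0 | [u Uu]] := set_0Vmem (union_bases M).
  by move: partP partQ; rewrite U0 !partition_set0 => /eqP-> /eqP->.
have Pu : pblock P u \in P by rewrite pblock_mem ?(cover_partition partP).
have Qu : pblock Q u \in Q by rewrite pblock_mem ?(cover_partition partQ).
rewrite (partition_parallel partP (fun B K BM KP => (basis_block1 B K _ BM KP Qu).1)).
by rewrite (partition_parallel partQ (fun B L BM LQ => (basis_block1 B _ L BM Pu LQ).2)).
Qed.
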